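(* Let $SC_2(x)=\sum_{n\ge0} sc_2(\mathcal{D}_n)x^n$, where $sc_2(\mathcal{D}_n)$ is the number of saturated chains of length 2 in the Dyck lattice $\mathcal{D}_n$. Then $$ SC_2(x)=\sum_{n\ge0}\Big(\sum_{\gamma\in\mathcal{D}_n}\big(2\cdot\#(du,du)_\gamma+\#(ddu)_\gamma+\#(duu)_\gamma\big)\Big)x^n . $$
   Context: A Dyck path of semilength $n$ is a lattice path from $(0,0)$ to $(2n,0)$ with steps $u=(1,1)$ and $d=(1,-1)$ never going below the $x$-axis, identified with a word over $\{u,d\}$. $\mathcal{D}_n$ is the set of Dyck paths of semilength $n$ ordered by containment: $\gamma\le\gamma'$ iff $\gamma$ lies weakly below $\gamma'$. A saturated chain of length $h$ is a sequence $\gamma^{(0)}<\cdots<\gamma^{(h)}$ in which each element covers the previous one. For words $\gamma_1,\ldots,\gamma_k$, $\#(\gamma_1,\ldots,\gamma_k)_\gamma$ denotes the number of sets of pairwise disjoint (non-overlapping) occurrences of the factors $\gamma_1,\ldots,\gamma_k$ in $\gamma$; thus $\#(du,du)_\gamma$ is the number of unordered pairs of distinct valleys of $\gamma$, and $\#(ddu)_\gamma$, $\#(duu)_\gamma$ are the numbers of occurrences of the factors $ddu$, $duu$ in $\gamma$. *)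

(* Dyck paths as words over bool: true = u = (1,1), false = d = (1,-1). *)
From mathcomp Require Import all_boot all_algebra.
Set Implicit Arguments. Unset Strict Implicit. Unset Printing Implicit Defensive.
Import GRing.Theory Num.Theory.
Local Open Scope ring_scope.

Definition u_step : bool := true.
Definition d_step : bool := false.

Definition step (b : bool) : int := if b then 1 else -1.

Definition height (s : seq bool) (i : nat) : int := \sum_(x <- take i s) step x.

Definition is_dyck (n : nat) (s : seq bool) : bool :=
  [&& size s == n.*2,
      all (fun i => 0 <= height s i) (iota 0 (n.*2).+1)
    & height s n.*2 == 0].

Definition Dn (n : nat) : {set (n.*2).-tuple bool} :=
  [set g : (n.*2).-tuple bool | is_dyck n g].

Definition dyck_le (s t : seq bool) : bool :=
  all (fun i => height s i <= height t i) (iota 0 (size s).+1).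

Definition dyck_lt (s t : seq bool) : bool := dyck_le s t && (s != t).

Definition dcovers (n : nat) (a b : (n.*2).-tuple bool) : bool :=
  [&& a \in Dn n, b \in Dn n, dyck_lt a b &
      [forall c in Dn n, ~~ (dyck_lt a c && dyck_lt c b)]].

Definition sc2 (n : nat) : nat :=
  #|[set abc : (n.*2).-tuple bool * (n.*2).-tuple bool * (n.*2).-tuple bool |
      dcovers abc.1.1 abc.1.2 && dcovers abc.1.2 abc.2]|.

Definition occ_at (w s : seq bool) (i : nat) : bool :=
  take (size w) (drop i s) == w.

Definition nocc (w s : seq bool) : nat := count (occ_at w s) (iota 0 (size s)).

Definition nocc2 (w s : seq bool) : nat :=
  (\sum_(i <- iota 0 (size s)) \sum_(j <- iota 0 (size s))
     [&& occ_at w s i, occ_at w s j & i + size w <= j])%N.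

(** A Dyck path covers [a] in [D_n] exactly when it is obtained from [a] by
    filling one valley [du] into a peak [ud]; so [sc_2(D_n)] counts pairs of a
    path [a] and a valley [i] of [a], weighted by the number of valleys of the
    filled path.  Filling the valley at [i] destroys it, creates a valley just
    before it iff [a] has a factor [ddu] ending there and one just after it iff
    [a] has a factor [duu] starting at [i], and leaves all other valleys alone.
    Summing over the [V] valleys of [a] thus gives [V (V - 1) + #(ddu) + #(duu)],
    and [V (V - 1) = 2 #(du,du)] because two valleys never overlap. *)

From mathcomp Require Import all_boot all_algebra zify.
Set Implicit Arguments. Unset Strict Implicit. Unset Printing Implicit Defensive.

Local Notation du := [:: d_step; u_step].
Local Notation ddu := [:: d_step; d_step; u_step].
Local Notation duu := [:: d_step; u_step; u_step].

Lemma sum_bool_count (I : Type) (r : seq I) (p : pred I) :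
  \sum_(i <- r) p i = count p r.
Proof. by elim: r => [|x r IH]; rewrite ?big_nil ?big_cons ?IH. Qed.

Lemma sum_eq_mul (I : eqType) (r : seq I) k (F : I -> nat) :
  \sum_(j <- r) (j == k) * F j = count_mem k r * F k.
Proof.
elim: r => [|x r IH]; rewrite ?big_nil ?big_cons ?IH //=.
by rewrite mulnDl; case: eqP => [->|].
Qed.

Lemma sum_iota_eq_mul m k (F : nat -> nat) :
  \sum_(j <- iota 0 m) (j == k) * F j = (k < m) * F k.
Proof. by rewrite sum_eq_mul count_uniq_mem ?iota_uniq // mem_iota. Qed.

Lemma occ_atE w s i : 0 < size w -> occ_at w s i =
  (i + size w <= size s)
  && all (fun j => nth false s (i + j) == nth false w j) (iota 0 (size w)).
Proof.
move=> w_gt0; rewrite /occ_at; case: leqP => hs /=.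
  have sz : size (take (size w) (drop i s)) = size w.
    by rewrite size_takel // size_drop leq_subRL // (leq_trans _ hs) ?leq_addr.
  apply/eqP/allP => [E j|Hw].
    by rewrite mem_iota => /andP[_ hj]; rewrite -E nth_take // nth_drop.
  apply: (eq_from_nth (x0 := false)) => // j; rewrite sz => hj.
  by rewrite nth_take // nth_drop; apply/eqP/Hw; rewrite mem_iota.
apply/negbTE/eqP => /(congr1 size); rewrite size_take size_drop.
(* [set] merges [size] terms that differ only in their implicit type, for [lia]. *)
by set S := size s; set W := size w; case: ifP; lia.
Qed.

Definition valley (s : seq bool) (i : nat) : bool :=
  [&& i.+1 < size s, ~~ nth false s i & nth false s i.+1].

Definition nvalleys (s : seq bool) : nat := \sum_(i <- iota 0 (size s)) valley s i.

Lemma occ_du s i : occ_at du s i = valley s i.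
Proof. by rewrite occ_atE // /valley /= addn0 addn1 addn2 eqbF_neg eqb_id andbT. Qed.

Lemma occ_ddu s i : occ_at ddu s i = ~~ nth false s i && valley s i.+1.
Proof.
rewrite occ_atE // /valley /= addn0 addn1 addn2 addn3 !eqbF_neg eqb_id andbT.
by case: (i.+2 < size s); rewrite ?andbF.
Qed.

Lemma occ_duu s i : occ_at duu s i = valley s i && nth false s i.+2.
Proof.
rewrite occ_atE // /valley /= addn0 addn1 addn2 addn3 eqbF_neg !eqb_id andbT.
case: (ltnP i.+2 (size s)) => hs; first by rewrite (ltnW hs) !andbA.
by rewrite (nth_default _ hs) !andbF.
Qed.

Definition ups (s : seq bool) (k : nat) : nat := count id (take k s).

Lemma ups0 s : ups s 0 = 0.
Proof. by rewrite /ups take0. Qed.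

Lemma upsS s k : ups s k.+1 = ups s k + nth false s k.
Proof.
rewrite /ups; case: (ltnP k (size s)) => hk.
  by rewrite (take_nth false hk) -cats1 count_cat /= addn0.
by rewrite !take_oversize ?(leqW hk) // nth_default ?addn0.
Qed.

Lemma height_ups s k :
  k <= size s -> height s k = ((2 * ups s k)%:Z - k%:Z)%R.
Proof.
move=> hk; rewrite /height /ups -[X in (_ - X%:Z)%R](size_takel hk).
elim: (take k s) => [|x l IH]; first by rewrite big_nil.
by rewrite big_cons IH; case: x => /=; rewrite /step; lia.
Qed.

Lemma Dn_ups n (g : (n.*2).-tuple bool) :
  g \in Dn n <-> (forall i, i <= n.*2 -> i <= 2 * ups g i) /\ ups g n.*2 = n.
Proof.
have sz : size g = n.*2 by rewrite size_tuple.
rewrite inE /is_dyck sz eqxx andTb height_ups ?sz //.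
split=> [/andP[/seq.allP H /eqP H0]|[H H0]].
  split; last by lia.
  move=> i hi; have := H i; rewrite mem_iota ltnS => /(_ hi).
  by rewrite height_ups ?sz //; lia.
apply/andP; split; last by apply/eqP; lia.
apply/seq.allP=> i; rewrite mem_iota ltnS => hi.
by rewrite height_ups ?sz //; have := H i hi; lia.
Qed.

Lemma dyck_le_ups (a b : seq bool) : size a = size b ->
  dyck_le a b <-> forall i, i <= size a -> ups a i <= ups b i.
Proof.
move=> sab; rewrite /dyck_le; split=> [/seq.allP H i hi|H].
  by have := H i; rewrite mem_iota ltnS => /(_ hi); rewrite !height_ups -?sab //; lia.
apply/seq.allP=> i; rewrite mem_iota ltnS => hi.
by rewrite !height_ups -?sab //; have := H i hi; lia.
Qed.

Lemma eq_from_ups (a b : seq bool) : size a = size b ->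
  (forall i, i <= size a -> ups a i = ups b i) -> a = b.
Proof.
move=> sab H; apply: (eq_from_nth (x0 := false)) => // j hj.
have := H j.+1 hj; rewrite !upsS H ?(ltnW hj) // => /addnI.
by case: (nth false a j); case: (nth false b j).
Qed.

Definition fill (s : seq bool) (i : nat) : seq bool :=
  mkseq (fun k => if k == i then true else if k == i.+1 then false else nth false s k)
        (size s).

Lemma size_fill s i : size (fill s i) = size s.
Proof. exact: size_mkseq. Qed.

Lemma nth_fill s i k : valley s i -> nth false (fill s i) k =
  if k == i then true else if k == i.+1 then false else nth false s k.
Proof.
case/andP=> hi _; case: (ltnP k (size s)) => hk; first by rewrite nth_mkseq.
rewrite !nth_default ?size_fill // !gtn_eqF //; lia.
Qed.

Lemma ups_fill s i k : valley s i -> ups (fill s i) k = ups s k + (k == i.+1).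
Proof.
move=> v; have /and3P[_ si si1] := v.
elim: k => [|k IH]; first by rewrite !ups0.
rewrite !upsS IH nth_fill //; case: (eqVneq k i) => [->|ki].
  by rewrite !eqxx (ltn_eqF (ltnSn i)) (negbTE si).
case: (eqVneq k i.+1) => [->|ki1]; last by rewrite eqSS (negbTE ki) !addn0.
by rewrite si1 gtn_eqF.
Qed.

Lemma fill_inj s i j : valley s i -> valley s j -> fill s i = fill s j -> i = j.
Proof.
move=> vi vj /(congr1 (nth false ^~ i)); rewrite !nth_fill // eqxx.
have [//|ne] := eqVneq i j; have [e|_] := eqVneq i j.+1 => //.
by case/and3P: vi => _ /negbTE ->.
Qed.

Lemma valley_fill s i j : valley s i ->
  valley (fill s i) j + (j == i) =
  valley s j + ((j.+1 == i) && occ_at ddu s j) + ((j == i.+1) && occ_at duu s i).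
Proof.
move=> v; have /and3P[hi si si1] := v.
rewrite occ_ddu occ_duu v /valley size_fill !nth_fill //.
case: (eqVneq j i) => [->|ji].
  by rewrite eqxx gtn_eqF // ltn_eqF // hi si si1.
case: (eqVneq j.+1 i) => [ji1|_].
  by subst i; rewrite ltn_eqF // (ltnW hi) hi (negbTE si) si1; case: (nth false s j).
case: (eqVneq j i.+1) => [->|_]; last by rewrite eqSS (negbTE ji) !addn0.
rewrite gtn_eqF // si1 /= andbF addn0 add0n.
by case: ltnP => // hs; rewrite nth_default.
Qed.

Lemma nvalleys_fill s i : valley s i ->
  nvalleys (fill s i) + 1 =
  nvalleys s + \sum_(j <- iota 0 (size s)) ((j.+1 == i) && occ_at ddu s j)
             + occ_at duu s i.
Proof.
move=> v; have /andP[hi _] := v.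
have one : \sum_(j <- iota 0 (size s)) (j == i) = 1.
  by rewrite -(eq_bigr _ (fun j _ => muln1 (j == i))) sum_iota_eq_mul ltnW.
have duu_i : \sum_(j <- iota 0 (size s)) ((j == i.+1) && occ_at duu s i) =
             occ_at duu s i.
  by under eq_bigr do rewrite -mulnb; rewrite sum_iota_eq_mul hi mul1n.
rewrite /nvalleys size_fill -one -big_split /=.
under eq_bigr do rewrite valley_fill //.
by rewrite !big_split /= duu_i.
Qed.

Lemma valley_pair s i j : valley s i * valley s j =
  (i == j) * valley s i + [&& valley s i, valley s j & i + 2 <= j]
                        + [&& valley s j, valley s i & j + 2 <= i].
Proof.
case: (eqVneq i j) => [<-|ij]; first by case: (valley s i); rewrite /= ?andbF; lia.
case vi: (valley s i); case vj: (valley s j) => //=.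
move: vi vj => /and3P[_ si si1] /and3P[_ sj sj1].
have [ji1|] := eqVneq j i.+1; first by rewrite ji1 si1 in sj.
have [ij1|] := eqVneq i j.+1; first by rewrite ij1 sj1 in si.
lia.
Qed.

Lemma nocc2_du s : nocc2 du s =
  \sum_(i <- iota 0 (size s)) \sum_(j <- iota 0 (size s))
     [&& valley s i, valley s j & i + 2 <= j].
Proof. by apply: eq_bigr => i _; apply: eq_bigr => j _; rewrite !occ_du. Qed.

Lemma nvalleys_sq s : nvalleys s * nvalleys s = nvalleys s + 2 * nocc2 du s.
Proof.
rewrite /nvalleys nocc2_du big_distrl /=.
under eq_bigr do rewrite big_distrr /=.
under eq_bigr do under eq_bigr do rewrite valley_pair.
under eq_bigr do rewrite !big_split /=.
rewrite !big_split /= [X in _ + X = _]exchange_big /= -addnA addnn -mul2n.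
congr (_ + _); apply: eq_big_seq => i; rewrite mem_iota => /andP[_ hi].
under eq_bigr do rewrite eq_sym.
by rewrite sum_iota_eq_mul hi mul1n.
Qed.

Lemma sum_valley_ddu s :
  \sum_(i <- iota 0 (size s))
     valley s i * \sum_(j <- iota 0 (size s)) ((j.+1 == i) && occ_at ddu s j) =
  nocc ddu s.
Proof.
rewrite /nocc -sum_bool_count.
under eq_bigr do rewrite big_distrr /=.
rewrite exchange_big; apply: eq_bigr => j _.
under eq_bigr do rewrite mulnb andbCA -mulnb eq_sym.
rewrite sum_iota_eq_mul occ_ddu.
case vj: (valley s j.+1); last by rewrite !andbF muln0.
by have /andP[/ltnW -> _] := vj; rewrite andbT mul1n.
Qed.

Lemma sum_valley_duu s :
  \sum_(i <- iota 0 (size s)) valley s i * occ_at duu s i = nocc duu s.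
Proof.
rewrite /nocc -sum_bool_count; apply: eq_bigr => i _.
by rewrite occ_duu mulnb andbA andbb.
Qed.

Lemma sum_nvalleys_fill s :
  \sum_(i <- iota 0 (size s)) valley s i * nvalleys (fill s i) =
  2 * nocc2 du s + nocc ddu s + nocc duu s.
Proof.
have fill_valley i : valley s i * nvalleys (fill s i) + valley s i =
  valley s i * nvalleys s
  + valley s i * \sum_(j <- iota 0 (size s)) ((j.+1 == i) && occ_at ddu s j)
  + valley s i * occ_at duu s i.
  by case vi: (valley s i); rewrite ?mul0n // !mul1n -nvalleys_fill.
have := @eq_bigr _ 0 addn _ (iota 0 (size s)) xpredT _ _ (fun i _ => fill_valley i).
rewrite !big_split /= -big_distrl /= sum_valley_ddu sum_valley_duu -/(nvalleys s).
rewrite nvalleys_sq; lia.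
Qed.

Lemma fill_between (a c : seq bool) i : valley a i -> size c = size a ->
  dyck_le a c -> dyck_le c (fill a i) -> c = a \/ c = fill a i.
Proof.
move=> v sc /(dyck_le_ups (esym sc)) le_ac.
move=> /(dyck_le_ups (etrans sc (esym (size_fill a i)))) le_cf.
have {}le_cf k : k <= size a -> ups c k <= ups a k + (k == i.+1).
  by move=> hk; rewrite -ups_fill //; apply: le_cf; rewrite sc.
have /andP[hi _] := v.
have [E|E] : ups c i.+1 = ups a i.+1 \/ ups c i.+1 = ups a i.+1 + 1.
  by have := le_ac _ (ltnW hi); have := le_cf _ (ltnW hi); rewrite eqxx; lia.
- left; apply: eq_from_ups => // k hk; rewrite sc in hk.
  have [->|ne] := eqVneq k i.+1; first by [].
  by have := le_ac _ hk; have := le_cf _ hk; rewrite (negbTE ne); lia.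
- right; apply: eq_from_ups; rewrite ?size_fill // => k hk; rewrite sc in hk.
  rewrite ups_fill //; have [->|ne] := eqVneq k i.+1; first by [].
  by have := le_ac _ hk; have := le_cf _ hk; rewrite (negbTE ne); lia.
Qed.

(** The valley is found at a lowest point of [a] among the positions where [a]
    lies strictly below [b]: there [a] must step down before and up after. *)
Lemma exists_fill_below (a b : seq bool) m : size a = m -> size b = m ->
  ups a m = ups b m -> dyck_le a b -> a != b ->
  exists2 i, valley a i & dyck_le (fill a i) b.
Proof.
move=> sa sb eq_m /(dyck_le_ups (etrans sa (esym sb))) le_ab ne_ab.
rewrite sa in le_ab.
have [k0 lt_k0] : exists k : 'I_m.+1, ups a k < ups b k.
  apply/existsP; apply: contraNT ne_ab => /existsPn lt_ab; apply/eqP.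
  apply: eq_from_ups => [|k]; first by rewrite sa sb.
  rewrite sa => hk; have /= := lt_ab (Ordinal (hk : k < m.+1)).
  by have := le_ab k hk; lia.
pose depth k := 2 * ups a k + (m - k).
case: (@arg_minnP _ k0 (fun k : 'I_m.+1 => ups a k < ups b k) depth lt_k0).
move=> j lt_j min_j.
have {}min_j k : k <= m -> ups a k < ups b k -> depth j <= depth k.
  by move=> hk; apply: (min_j (Ordinal (hk : k < m.+1))).
have j_ltm : j < m.
  rewrite ltn_neqAle -ltnS ltn_ord andbT.
  by apply: contraTneq lt_j => ->; rewrite eq_m ltnn.
move: (nat_of_ord j) lt_j min_j j_ltm => [|i] lt_i min_i i_ltm.
  by rewrite !ups0 in lt_i.
have step_b k : ups b k.+1 <= ups b k + 1 by rewrite upsS leq_add2l leq_b1.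
have v : valley a i.
  rewrite /valley sa i_ltm /=; apply/andP; split.
  - apply/negP => ai; have := min_i i (ltnW (ltnW i_ltm)).
    by have := step_b i; move: lt_i; rewrite /depth !upsS ai; lia.
  - apply/negPn/negP => ai1; have := min_i i.+2 i_ltm.
    by have := le_ab i.+2 i_ltm; move: lt_i; rewrite /depth !upsS (negbTE ai1); lia.
exists i => //; apply/dyck_le_ups; rewrite ?size_fill ?sa ?sb // => k hk.
by rewrite ups_fill //; case: eqP => [->|_]; rewrite ?addn1 ?addn0 ?le_ab.
Qed.

Lemma fill_tupleP m (t : m.-tuple bool) i : size (fill t i) == m.
Proof. by rewrite size_fill size_tuple. Qed.

Definition fill_tuple m (t : m.-tuple bool) i := Tuple (fill_tupleP t i).

Section Covers.

Variable n : nat.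
Implicit Types a b : (n.*2).-tuple bool.

Lemma fill_Dn a i : a \in Dn n -> valley a i -> fill_tuple a i \in Dn n.
Proof.
move=> /Dn_ups[a_ge a_end] v; have /andP[hi _] := v; rewrite size_tuple in hi.
apply/Dn_ups; split=> [k hk|]; rewrite /= ups_fill //; first by have := a_ge k hk; lia.
by rewrite a_end (gtn_eqF hi) addn0.
Qed.

Lemma dcovers_fill a i : a \in Dn n -> valley a i -> dcovers a (fill_tuple a i).
Proof.
move=> aD v; have /andP[hi _] := v.
have le_af : dyck_le a (fill a i).
  by apply/dyck_le_ups; rewrite ?size_fill // => k _; rewrite ups_fill // leq_addr.
have ne_af : (a : seq bool) != fill a i.
  by apply/eqP => /(congr1 (ups^~ i.+1)); rewrite ups_fill // eqxx; lia.
rewrite /dcovers aD fill_Dn //= /dyck_lt le_af ne_af /=.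
apply/forall_inP => c _; apply/negP => /andP[/andP[le_ac ne_ac] /andP[le_cf ne_cf]].
have [] := fill_between v _ le_ac le_cf; rewrite ?size_tuple //.
  by move=> e; rewrite e eqxx in ne_ac.
by move=> e; rewrite e eqxx in ne_cf.
Qed.

Lemma dcovers_valley a b : dcovers a b -> exists2 i, valley a i & b = fill_tuple a i.
Proof.
case/and4P=> aD bD /andP[le_ab ne_ab] cov.
have ups_end c : c \in Dn n -> ups c n.*2 = n by case/Dn_ups.
have [i v le_fb] := exists_fill_below (size_tuple a) (size_tuple b)
  (etrans (ups_end a aD) (esym (ups_end b bD))) le_ab ne_ab.
exists i => //; apply/val_inj/esym/eqP.
move/forall_inP: cov => /(_ _ (fill_Dn aD v)).
have /and4P[_ _ -> _] := dcovers_fill aD v.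
by rewrite /dyck_lt le_fb /= negbK.
Qed.

Lemma dcovers_sum_valley a b : a \in Dn n ->
  dcovers a b = \sum_(i <- iota 0 n.*2) (valley a i && (b == fill_tuple a i)) :> nat.
Proof.
move=> aD; have [cab|ncab] := boolP (dcovers a b); last first.
  rewrite big1 // => i _; apply/eqP; rewrite eqb0; apply: contra ncab.
  by case/andP=> v /eqP ->; apply: dcovers_fill.
have [i v ->] := dcovers_valley cab.
have hi : i \in iota 0 n.*2 by case/andP: v; rewrite mem_iota size_tuple; lia.
rewrite (bigD1_seq i) ?iota_uniq //= v eqxx big1 // => j ne_ji.
apply/eqP; rewrite eqb0; apply/andP => -[vj /eqP/(congr1 val) /= e].
by move/eqP: ne_ji; apply; apply: (fill_inj vj v).
Qed.

Lemma sum_dcovers a (g : (n.*2).-tuple bool -> nat) :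
  \sum_b dcovers a b * g b =
  (a \in Dn n) * \sum_(i <- iota 0 n.*2) valley a i * g (fill_tuple a i).
Proof.
have [aD|aN] := boolP (a \in Dn n); last first.
  by rewrite big1 // => b _; rewrite /dcovers (negbTE aN).
rewrite mul1n; under [X in X = _]eq_bigr => b _ do
  rewrite (dcovers_sum_valley b aD) big_distrl.
rewrite exchange_big; apply: eq_bigr => i _.
rewrite (bigD1 (fill_tuple a i)) //= eqxx andbT big1 ?addn0 // => b.
by move/negbTE ->; rewrite andbF.
Qed.

End Covers.

Theorem mainTheorem2 : forall n : nat,
  sc2 n =
  (\sum_(g in Dn n)
     (2 * nocc2 [:: d_step; u_step] g
      + nocc [:: d_step; d_step; u_step] g
      + nocc [:: d_step; u_step; u_step] g))%N.
Proof.
move=> n; pose T := (n.*2).-tuple bool.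
have sc2E : sc2 n = \sum_(a : T) \sum_(b : T) dcovers a b * \sum_(c : T) dcovers b c.
  under eq_bigr do under eq_bigr do rewrite big_distrr /=.
  rewrite pair_bigA pair_bigA /sc2 -sum1_card big_mkcond /=.
  by apply: eq_bigr => -[[a b] c] _; rewrite inE mulnb; case: ifP.
have covers_of (b : T) : \sum_(c : T) dcovers b c = (b \in Dn n) * nvalleys b.
  under eq_bigr do rewrite -[nat_of_bool _]muln1.
  rewrite sum_dcovers /nvalleys size_tuple; congr (_ * _).
  by apply: eq_bigr => i _; rewrite muln1.
rewrite sc2E [RHS]big_mkcond /=; apply: eq_bigr => a _.
under eq_bigr do rewrite covers_of.
rewrite (sum_dcovers a (fun b => (b \in Dn n) * nvalleys b)).
have [aD|] := boolP (a \in Dn n); last by rewrite mul0n.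
rewrite mul1n -sum_nvalleys_fill size_tuple; apply: eq_bigr => i _.
by have [v|_] := boolP (valley a i); rewrite ?mul0n // fill_Dn // !mul1n.
Qed.
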